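(* Consider $\dot y=A(t)y+B(t)(u+\Delta(y,t))$, $y\in\mathbb{R}^{\bar n}$, $u\in\mathbb{R}^{\bar m}$, with continuous, bounded, $T$-periodic $A(t),B(t)$ (minimal period $T>0$) and unknown bounded $\Delta$. Let $K:\mathbb{R}_+\to\mathbb{R}^{\bar m\times\bar n}$ be continuous and $T$-periodic such that the origin of $\dot\chi=A^{cl}(t)\chi$, $A^{cl}=A+BK$, is exponentially stable, and let $\Psi_{A^{cl}}(t,t_0)$ be its state-transition matrix and $\mathcal M_{A^{cl}}=\Psi_{A^{cl}}(T,0)$ its monodromy matrix. Let $X_0\in\mathbb{R}^{\bar n\times(\bar n-\bar m)}$ be of full rank and let the $\mathcal{C}^1$ matrix function $S:\mathbb{R}_+\to\mathbb{R}^{\bar m\times\bar n}$ satisfy $S(t)\Psi_{A^{cl}}(t,0)X_0p=0$ for all $p\in\mathbb{R}^{\bar n-\bar m}$ and all $t\ge0$. If $\operatorname{rank}[S(t)B(t)]=\bar m$ for all $t\ge0$, then forward invariance of $S(t)y(t)\equiv0$ for $t\ge t_0$ corresponds to the system experiencing the equivalent control $u_{eq}(t)=K(t)y(t)-\Delta(y(t),t)$ for all $t\ge t_0$. Moreover, if $S$ is $T$-periodic, then the columns of $X_0$ form a basis of an invariant subspace of $\mathcal M_{A^{cl}}$ of codimension $\bar m$.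
   Context: Equivalent control: the control obtained from requiring $\frac{d}{dt}(S(t)y(t))\equiv0$ along motions satisfying $S(t)y(t)=0$. *)

From HB Require Import structures.
From mathcomp Require Import all_boot all_order all_algebra.
From mathcomp Require Import all_classical all_reals all_analysis.
Set Implicit Arguments. Unset Strict Implicit. Unset Printing Implicit Defensive.
Import Order.TTheory GRing.Theory Num.Theory.
Import numFieldNormedType.Exports.
Local Open Scope ring_scope.

Definition state_transition (R : realType) (n : nat)
    (Acl : R -> 'M[R]_n) (Psi : R -> R -> 'M[R]_n) : Prop :=
  [/\ forall s, Psi s s = 1%:M,
      forall t s, is_derive t (1 : R) (fun tau => Psi tau s) (Acl t *m Psi t s)
    & forall t s r, Psi t s *m Psi s r = Psi t r].

Definition exp_stable (R : realType) (n : nat) (Acl : R -> 'M[R]_n) : Prop :=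
  exists c lam : R, 0 < c /\ 0 < lam /\
    forall (t0 : R) (chi : R -> 'cV[R]_n), 0 <= t0 ->
      (forall t, t0 <= t -> is_derive t (1 : R) chi (Acl t *m chi t)) ->
      forall t, t0 <= t -> `|chi t| <= c * expR (- lam * (t - t0)) * `|chi t0|.

Definition plant_motion (R : realType) (n m : nat)
    (A : R -> 'M[R]_n) (B : R -> 'M[R]_(n, m))
    (Delta : 'cV[R]_n -> R -> 'cV[R]_m)
    (u : R -> 'cV[R]_m) (y : R -> 'cV[R]_n) (t0 : R) : Prop :=
  forall t, t0 <= t ->
    is_derive t (1 : R) y (A t *m y t + B t *m (u t + Delta (y t) t)).

Definition C1_on_nonneg (R : realType) (m n : nat) (S : R -> 'M[R]_(m, n)) : Prop :=
  (forall t, 0 <= t -> derivable S t (1 : R)) /\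
  (forall t, 0 <= t -> {for t, continuous (fun tau => 'D_(1 : R) S tau)}).

From HB Require Import structures.
From mathcomp Require Import all_boot all_order all_algebra.
From mathcomp Require Import all_classical all_reals all_analysis.
Set Implicit Arguments. Unset Strict Implicit. Unset Printing Implicit Defensive.
Import Order.TTheory GRing.Theory Num.Theory.
Import numFieldNormedType.Exports.
Local Open Scope ring_scope.

(* Since S(t) B(t) is invertible, S(t) has rank m, so its kernel has dimension
   n - m and is spanned by the columns of Psi(t,0) X0.  Differentiating
   S(t) Psi(t,0) X0 p = 0 shows that the closed-loop field is tangent to the
   surface: S'(t) v + S(t) Acl(t) v = 0 whenever S(t) v = 0.  Along a plant motion
   that stays on the surface, d/dt (S y) = 0 reads S' y + S (A y + B (u + Delta)) = 0;
   subtracting the tangency identity leaves S B (u + Delta - K y) = 0, which is the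
   equivalent control.  Conversely, under the equivalent control y is a closed-loop
   motion, and exponential stability makes such motions unique, so
   y(t) = Psi(t,t0) y(t0) = Psi(t,0) X0 p stays on the surface.  If moreover S is
   T-periodic, then S(0) annihilates Psi(T,0) X0, whose columns therefore lie in
   ker S(0) = span X0. *)

Section kernel_basis.
Variables (F : fieldType) (m n : nat) (S : 'M[F]_(m, n)) (M : 'M[F]_(n, n - m)).
Hypotheses (rankS : \rank S = m) (rankM : \rank M = (n - m)%N) (SM0 : S *m M = 0).

Lemma ker_basis_sub k (Y : 'M[F]_(n, k)) : S *m Y = 0 -> (Y^T <= M^T)%MS.
Proof.
have ker_sub j (Z : 'M[F]_(n, j)) (SZ0 : S *m Z = 0) : (Z^T <= kermx S^T)%MS.
  by apply/sub_kermxP; rewrite -trmx_mul SZ0 trmx0.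
move=> /ker_sub /submx_trans; apply.
by rewrite -(mxrank_leqif_sup (ker_sub _ _ SM0)).2 mxrank_ker !mxrank_tr rankS rankM.
Qed.

Lemma ker_basis_span (y : 'cV[F]_n) : S *m y = 0 -> exists p, y = M *m p.
Proof.
move=> /ker_basis_sub /submxP[D yD].
by exists D^T; rewrite -[y]trmxK yD trmx_mul trmxK.
Qed.

End kernel_basis.

Section derivatives.
Variables (R : realFieldType) (V : normedModType R).

Lemma is_derive_mulmx a b c (F : V -> 'M[R]_(a, b)) (G : V -> 'M[R]_(b, c))
    t v dF dG :
  is_derive t v F dF -> is_derive t v G dG ->
  is_derive t v (fun x => F x *m G x) (dF *m G t + F t *m dG).
Proof.
move=> [Fv <-] [Gv <-].
have /derivable_mxP Fijv := Fv; have /derivable_mxP Gijv := Gv.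
have entry_derive i j : is_derive t v (fun x => (F x *m G x) i j)
    (\sum_(k < b) ('D_v (fun x => F x i k) t * G t k j
                   + F t i k * 'D_v (fun x => G x k j) t)).
  have -> : (fun x => (F x *m G x) i j) =
            \sum_(k < b) ((fun x => F x i k) * (fun x => G x k j)).
    by apply/funext => x; rewrite mxE fct_sumE.
  apply: is_derive_sum => k; apply: is_derive_eq.
    exact: is_deriveM (derivableP (Fijv i k)) (derivableP (Gijv k j)).
  by rewrite addrC mulrC [X in _ + X]mulrC.
have FGv : derivable (fun x => F x *m G x) t v.
  by apply/derivable_mxP => i j; case: (entry_derive i j).
apply: DeriveDef => //; rewrite derive_mx //; apply/matrixP => i j.
rewrite !mxE (@derive_val _ _ _ _ _ _ _ (entry_derive i j)) big_split /=.
by congr (_ + _); apply: eq_bigr => k _; rewrite ?derive_mx // !mxE.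
Qed.

Lemma is_derive_eq0_on_right (f : R -> V) (t : R) (d : V) :
  is_derive t (1 : R) f d -> (forall s, t <= s -> f s = 0) -> d = 0.
Proof.
move=> [f_derivable <-] f0; rewrite /derive cvg_at_rightE //.
apply: cvg_lim => //; apply: cvg_near_cst; near=> h.
rewrite /= !f0 ?subr0 ?scaler0 // -lerBlDr subrr scaler1; apply/ltW.
by near: h; exact: nbhs_right_gt.
Unshelve. all: by end_near. Qed.

End derivatives.

Section closed_loop.
Variables (R : realType) (n : nat) (Acl : R -> 'M[R]_n) (Psi : R -> R -> 'M[R]_n).

Lemma exp_stable_eq0 (chi : R -> 'cV[R]_n) (t0 : R) :
  exp_stable Acl -> 0 <= t0 ->
  (forall t, t0 <= t -> is_derive t (1 : R) chi (Acl t *m chi t)) -> chi t0 = 0 ->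
  forall t, t0 <= t -> chi t = 0.
Proof.
move=> [? [? [_ [_ chi_decay]]]] t0_ge0 chi_sol chi0 t t0t.
apply/eqP; rewrite -normr_le0.
by rewrite (le_trans (chi_decay _ _ t0_ge0 chi_sol _ t0t)) // chi0 normr0 mulr0.
Qed.

Hypothesis PsiP : state_transition Acl Psi.

Lemma state_transition_rank k (X : 'M[R]_(n, k)) t s : \rank (Psi t s *m X) = \rank X.
Proof.
have [Psi_refl _ Psi_comp] := PsiP.
apply/eqP; rewrite eqn_leq mxrankM_maxr /=.
have {1}-> : X = Psi s t *m (Psi t s *m X) by rewrite mulmxA Psi_comp Psi_refl mul1mx.
exact: mxrankM_maxr.
Qed.

Lemma is_derive_state_transition k (X : 'M[R]_(n, k)) t s :
  is_derive t (1 : R) (fun tau => Psi tau s *m X) (Acl t *m (Psi t s *m X)).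
Proof.
have [_ dPsi _] := PsiP.
apply: is_derive_eq; first exact: is_derive_mulmx (dPsi t s) (is_derive_cst X t 1).
by rewrite mulmx0 addr0 mulmxA.
Qed.

Lemma exp_stable_motion (chi : R -> 'cV[R]_n) (t0 : R) :
  exp_stable Acl -> 0 <= t0 ->
  (forall t, t0 <= t -> is_derive t (1 : R) chi (Acl t *m chi t)) ->
  forall t, t0 <= t -> chi t = Psi t t0 *m chi t0.
Proof.
move=> Acl_stable t0_ge0 chi_sol t t0t; apply/subr0_eq.
have [Psi_refl _ _] := PsiP.
apply: (@exp_stable_eq0 (fun t => chi t - Psi t t0 *m chi t0) t0) t0t => //=.
  move=> x t0x.
  have := is_deriveB (chi_sol x t0x) (is_derive_state_transition (chi t0) x t0).
  by rewrite -mulmxBr.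
by rewrite Psi_refl mul1mx subrr.
Qed.

End closed_loop.

Section sliding_surface.
Variables (R : realType) (n m : nat) (A : R -> 'M[R]_n) (B : R -> 'M[R]_(n, m))
  (Delta : 'cV[R]_n -> R -> 'cV[R]_m) (K : R -> 'M[R]_(m, n))
  (Psi : R -> R -> 'M[R]_n) (X0 : 'M[R]_(n, n - m)) (S : R -> 'M[R]_(m, n)).

Let Acl t := A t + B t *m K t.

Hypotheses (PsiP : state_transition Acl Psi) (rankX0 : \rank X0 = (n - m)%N)
  (S_derivable : forall t : R, 0 <= t -> derivable S t 1)
  (S_Psi_X0 : forall (t : R) (p : 'cV[R]_(n - m)),
     0 <= t -> S t *m (Psi t 0 *m X0 *m p) = 0)
  (rank_SB : forall t : R, 0 <= t -> \rank (S t *m B t) = m).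

Lemma leq_input_state : (m <= n)%N.
Proof.
by rewrite -{1}(rank_SB (lexx 0)) (leq_trans (mxrankM_maxl _ _)) ?rank_leq_col.
Qed.

Lemma rank_surface (t : R) : 0 <= t -> \rank (S t) = m.
Proof.
move=> t_ge0; apply/eqP.
by rewrite eqn_leq rank_leq_row -{1}(rank_SB t_ge0) mxrankM_maxl.
Qed.

Lemma surface_Psi_X0_eq0 (t : R) : 0 <= t -> S t *m (Psi t 0 *m X0) = 0.
Proof.
move=> t_ge0; apply/row_matrixP => i; apply/rowP => j.
have := S_Psi_X0 (delta_mx j 0) t_ge0; rewrite mulmxA -colE => /matrixP/(_ i 0).
by rewrite !mxE.
Qed.

Lemma surface_kernel (t : R) (v : 'cV[R]_n) : 0 <= t -> S t *m v = 0 ->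
  exists p, v = Psi t 0 *m X0 *m p.
Proof.
move=> t_ge0.
have rank_Psi_X0 : \rank (Psi t 0 *m X0) = (n - m)%N.
  by rewrite (state_transition_rank PsiP).
by move=> /(ker_basis_span (rank_surface t_ge0) rank_Psi_X0 (surface_Psi_X0_eq0 t_ge0)).
Qed.

Lemma closed_loop_tangent (t : R) (v : 'cV[R]_n) : 0 <= t -> S t *m v = 0 ->
  'D_1 S t *m v + S t *m (Acl t *m v) = 0.
Proof.
move=> t_ge0 /(surface_kernel t_ge0)[p ->]; rewrite -!mulmxA.
apply: is_derive_eq0_on_right.
  exact: is_derive_mulmx (derivableP (S_derivable t_ge0))
    (is_derive_state_transition PsiP (X0 *m p) t 0).
by move=> s ts /=; rewrite [Psi s 0 *m _]mulmxA S_Psi_X0 // (le_trans t_ge0).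
Qed.

Lemma sliding_equivalent_control (t0 : R) (y : R -> 'cV[R]_n) (u : R -> 'cV[R]_m) :
  0 <= t0 -> plant_motion A B Delta u y t0 ->
  (forall t, t0 <= t -> S t *m y t = 0) ->
  forall t, t0 <= t -> u t = K t *m y t - Delta (y t) t.
Proof.
move=> t0_ge0 y_motion Sy0 t t0t; have t_ge0 := le_trans t0_ge0 t0t.
set w := u t + Delta (y t) t.
have plant_tangent : 'D_1 S t *m y t + S t *m (A t *m y t + B t *m w) = 0.
  apply: is_derive_eq0_on_right (fun s ts => Sy0 s (le_trans t0t ts)).
  exact: is_derive_mulmx (derivableP (S_derivable t_ge0)) (y_motion t t0t).
have closed_tangent := closed_loop_tangent t_ge0 (Sy0 t t0t).
have SB_unit : S t *m B t \in unitmx by rewrite -row_free_unit /row_free rank_SB.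
have SB_w_Ky : S t *m B t *m (w - K t *m y t) = 0.
  rewrite -(subrr (0 : 'cV_m)) -{1}plant_tangent -closed_tangent /Acl.
  clearbody w; rewrite mulmxBr !(mulmxDl, mulmxDr) !mulmxA.
  by rewrite opprD addrACA subrr add0r opprD addrACA subrr add0r.
move: SB_w_Ky => /(congr1 (mulmx (invmx (S t *m B t)))).
by rewrite mulKmx // mulmx0 => /subr0_eq <-; rewrite addrK.
Qed.

Lemma equivalent_control_closed_loop (t0 : R) (y : R -> 'cV[R]_n) (u : R -> 'cV[R]_m) :
  plant_motion A B Delta u y t0 ->
  (forall t, t0 <= t -> u t = K t *m y t - Delta (y t) t) ->
  forall t, t0 <= t -> is_derive t (1 : R) y (Acl t *m y t).
Proof.
move=> y_motion u_eq t t0t; have := y_motion t t0t.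
by rewrite u_eq // subrK /Acl mulmxDl mulmxA.
Qed.

Lemma equivalent_control_sliding (t0 : R) (y : R -> 'cV[R]_n) (u : R -> 'cV[R]_m) :
  exp_stable Acl -> 0 <= t0 -> plant_motion A B Delta u y t0 -> S t0 *m y t0 = 0 ->
  (forall t, t0 <= t -> u t = K t *m y t - Delta (y t) t) ->
  forall t, t0 <= t -> S t *m y t = 0.
Proof.
move=> Acl_stable t0_ge0 y_motion Sy0 u_eq t t0t.
have [_ _ Psi_comp] := PsiP.
have y_closed_loop := equivalent_control_closed_loop y_motion u_eq.
rewrite (exp_stable_motion PsiP Acl_stable t0_ge0 y_closed_loop t0t).
have [p ->] := surface_kernel t0_ge0 Sy0.
by rewrite ![Psi t t0 *m _]mulmxA Psi_comp S_Psi_X0 // (le_trans t0_ge0).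
Qed.

Lemma monodromy_stable_X0 (T : R) :
  0 <= T -> (forall t, 0 <= t -> S (t + T) = S t) -> stablemx X0^T (Psi T 0)^T.
Proof.
move=> T_ge0 S_periodic; have [Psi_refl _ _] := PsiP.
have S0_X0 : S 0 *m X0 = 0 by rewrite -[X0]mul1mx -(Psi_refl 0) surface_Psi_X0_eq0.
rewrite -trmx_mul (ker_basis_sub (rank_surface (lexx 0)) rankX0 S0_X0) //.
by rewrite -(S_periodic 0 (lexx 0)) add0r surface_Psi_X0_eq0.
Qed.

End sliding_surface.

Theorem lemma3 (R : realType) (n m : nat) (T : R)
    (A : R -> 'M[R]_n) (B : R -> 'M[R]_(n, m))
    (Delta : 'cV[R]_n -> R -> 'cV[R]_m)
    (K : R -> 'M[R]_(m, n)) (Psi : R -> R -> 'M[R]_n)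
    (X0 : 'M[R]_(n, n - m)) (S : R -> 'M[R]_(m, n)) :
  0 < T ->
  continuous A -> continuous B -> bounded_fun A -> bounded_fun B ->
  periodic A T -> periodic B T ->
  (forall T' : R, 0 < T' < T -> ~ (periodic A T' /\ periodic B T')) ->
  (exists M : R, forall y t, `|Delta y t| <= M) ->
  continuous K -> periodic K T ->
  exp_stable (fun t => A t + B t *m K t) ->
  state_transition (fun t => A t + B t *m K t) Psi ->
  \rank X0 = (n - m)%N ->
  C1_on_nonneg S ->
  (forall (t : R) (p : 'cV[R]_(n - m)), 0 <= t -> S t *m (Psi t 0 *m X0 *m p) = 0) ->
  (forall t : R, 0 <= t -> \rank (S t *m B t) = m) ->
  (forall (t0 : R) (y : R -> 'cV[R]_n) (u : R -> 'cV[R]_m),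
      0 <= t0 -> plant_motion A B Delta u y t0 -> S t0 *m y t0 = 0 ->
      ((forall t, t0 <= t -> S t *m y t = 0) <->
       (forall t, t0 <= t -> u t = K t *m y t - Delta (y t) t)))
  /\
  ((forall t : R, 0 <= t -> S (t + T) = S t) ->
      stablemx X0^T (Psi T 0)^T /\ (\rank X0 + m)%N = n).
Proof.
move=> T_gt0 _ _ _ _ _ _ _ _ _ _ Acl_stable PsiP rankX0 [S_derivable _] S_Psi_X0 rank_SB.
split=> [t0 y u t0_ge0 y_motion Sy0 | S_periodic].
  split=> [Sy | u_eq].
  - exact/(sliding_equivalent_control PsiP rankX0 S_derivable
      S_Psi_X0 rank_SB t0_ge0 y_motion Sy).
  - exact/(equivalent_control_sliding PsiP rankX0 S_Psi_X0 rank_SB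
      Acl_stable t0_ge0 y_motion Sy0 u_eq).
split.
  exact/(monodromy_stable_X0 PsiP rankX0 S_Psi_X0 rank_SB (ltW T_gt0) S_periodic).
by rewrite rankX0 subnK // (leq_input_state rank_SB).
Qed.
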